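(* Let $v$ be a non-constant analytic function on $\mathbb{T}=\mathbb{R}/\mathbb{Z}$ whose shortest (positive) period is $1$. Then there exist $s\in\mathbb{N}$ and $c>0$ such that $$\max_{0\le l\le s}\left|\partial_\theta^l\big(v(\theta+\phi)-v(\theta)\big)\right|\ge c\|\phi\|_{\mathbb{T}}\quad\forall\theta,\phi\in\mathbb{T}.$$
   Context: $\|\phi\|_{\mathbb{T}}=\inf_{l\in\mathbb{Z}}|l-\phi|$. *)

From Stdlib Require Import Reals ZArith.
From Coquelicot Require Import Coquelicot.
Open Scope R_scope.

Definition real_analytic (v : R -> R) : Prop :=
  forall x : R, exists (a : nat -> R) (r : R), 0 < r /\
    forall y : R, Rabs (y - x) < r -> is_pseries a (y - x) (v y).

Definition is_period (v : R -> R) (T : R) : Prop := forall x : R, v (x + T) = v x.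

Definition minimal_period_one (v : R -> R) : Prop :=
  is_period v 1 /\ forall T : R, 0 < T < 1 -> ~ is_period v T.

Definition torus_norm (phi : R) : R :=
  real (Glb_Rbar (fun x : R => exists l : Z, x = Rabs (IZR l - phi))).

Fixpoint max_upto (f : nat -> R) (s : nat) : R :=
  match s with
  | O => f O
  | S n => Rmax (max_upto f n) (f (S n))
  end.

From Stdlib Require Import Reals ZArith Lra Lia Classical ClassicalEpsilon.
From Coquelicot Require Import Coquelicot.
Open Scope R_scope.

(* Near a point (theta0, phi0) of the square [0,1]^2 a single derivative of the increment
   theta |-> v (theta + phi) - v theta already gives the bound.  If phi0 is 0 or 1, the
   nonconstant analytic v has some v^(k+1) (theta0) <> 0 (identity theorem), and the mean
   value theorem gives |v^(k) (theta + phi) - v^(k) theta| >= c |phi - phi0| >= c ||phi||.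
   If 0 < phi0 < 1, phi0 is not a period, so again by the identity theorem some
   v^(k) (theta0 + phi0) <> v^(k) theta0; by continuity this difference stays bounded away
   from 0 nearby, while ||phi|| <= 1.  Compactness of the square makes the orders k and the
   constants uniform, and 1-periodicity in theta and phi extends the bound to the plane. *)

Lemma continuous_eps_delta (f : R -> R) (x eps : R) : continuous f x -> 0 < eps ->
  exists delta, 0 < delta /\ forall y, Rabs (y - x) < delta -> Rabs (f y - f x) < eps.
Proof.
  intros Hc Heps.
  destruct (Hc _ (locally_ball (f x) (mkposreal eps Heps))) as [d Hd].
  exists d; split; [apply cond_pos | exact Hd].
Qed.

Lemma continuous_neq_locally (f g : R -> R) (x : R) :
  continuous f x -> continuous g x -> f x <> g x -> locally x (fun y => f y <> g y).
Proof.
  intros Hf Hg Hne.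
  assert (Hpos : 0 < Rabs (f x - g x)) by (apply Rabs_pos_lt; lra).
  destruct (continuous_eps_delta (fun y => f y - g y) x _
              (continuous_minus _ _ _ Hf Hg) Hpos) as [d [Hd C]].
  exists (mkposreal d Hd); intros y Hy Heq; specialize (C y Hy).
  rewrite Heq, Rminus_diag, Rminus_0_l, Rabs_Ropp in C; lra.
Qed.

Lemma locally_constant_everywhere (P : R -> Prop) :
  (forall x, P x -> locally x P) -> (forall x, ~ P x -> locally x (fun y => ~ P y)) ->
  forall x y, P x -> P y.
Proof.
  intros HP HnP x y Px; apply NNPP; intro Py.
  (* The indicator of P is locally constant, hence continuous, so by the intermediate
     value theorem it cannot take both values 0 and 1. *)
  set (chi := fun t => if excluded_middle_informative (P t) then 1 else 0).
  assert (Hchi : forall t, locally t (fun z => chi z = chi t)).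
  { intro t; unfold chi; destruct (excluded_middle_informative (P t)) as [Pt|Pt].
    - apply (filter_imp P); [intros z Pz | exact (HP t Pt)].
      destruct (excluded_middle_informative (P z)); easy.
    - apply (filter_imp (fun z => ~ P z)); [intros z Pz | exact (HnP t Pt)].
      destruct (excluded_middle_informative (P z)); easy. }
  assert (Hcont : continuity chi).
  { intro t; apply continuity_pt_filterlim.
    apply (filterlim_ext_loc (fun _ => chi t)); [|apply filterlim_const].
    apply (filter_imp _ _ (fun z Hz => eq_sym Hz) (Hchi t)). }
  assert (Hx : chi x = 1) by (unfold chi; destruct (excluded_middle_informative (P x)); easy).
  assert (Hy : chi y = 0) by (unfold chi; destruct (excluded_middle_informative (P y)); easy).
  destruct (IVT_gen chi x y (/ 2) Hcont) as [z [_ Hz]].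
  { rewrite Hx, Hy, Rmin_right, Rmax_left; lra. }
  revert Hz; unfold chi; destruct (excluded_middle_informative (P z)); lra.
Qed.

Lemma CV_radius_ge_of_ex_pseries (a : nat -> R) (r : R) :
  (forall z, Rabs z < r -> ex_pseries a z) -> Rbar_le r (CV_radius a).
Proof.
  intros Hex; apply Rbar_not_lt_le; intro Hlt.
  pose proof (CV_radius_ge_0 a) as Hc0.
  destruct (CV_radius a) as [c| |] eqn:Hc; try easy; simpl in Hlt, Hc0.
  set (z := (c + r) / 2).
  assert (Hz : Rabs z = z) by (apply Rabs_pos_eq; unfold z; lra).
  apply (CV_disk_outside a z); [rewrite Hc, Hz; simpl; unfold z; lra|].
  eapply is_lim_seq_ext; [|exact (ex_series_lim_0 _ (Hex z ltac:(rewrite Hz; unfold z; lra)))].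
  intro n; rewrite pow_n_pow; apply Rmult_comm.
Qed.

Lemma analytic_local_pseries (f : R -> R) : real_analytic f -> forall x,
  exists a r, 0 < r /\ Rbar_le r (CV_radius a) /\
    forall y, Rabs (y - x) < r -> f y = PSeries a (y - x).
Proof.
  intros Hf x; destruct (Hf x) as [a [r [Hr H]]].
  exists a, r; split; [exact Hr|]; split.
  - apply CV_radius_ge_of_ex_pseries; intros z Hz.
    specialize (H (z + x)); replace (z + x - x) with z in H by ring.
    exists (f (z + x)); exact (H Hz).
  - intros y Hy; symmetry; apply is_pseries_unique, H, Hy.
Qed.

Section LocalPSeries.

Variables (f : R -> R) (a : nat -> R) (x r : R).
Hypothesis Hrad : Rbar_le r (CV_radius a).
Hypothesis Hrep : forall y, Rabs (y - x) < r -> f y = PSeries a (y - x).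

Lemma is_derive_n_local_pseries (y : R) (k : nat) : Rabs (y - x) < r ->
  is_derive_n f k y (Derive_n (PSeries a) k (y - x)).
Proof.
  intro Hy.
  apply (is_derive_n_ext_loc (fun t => PSeries a (t + - x))).
  - exists (mkposreal _ (proj2 (Rlt_0_minus _ _) Hy)); intros t Ht; symmetry; apply Hrep.
    change (Rabs (t - y) < r - Rabs (y - x)) in Ht.
    pose proof (Rabs_triang (t - y) (y - x)).
    replace (t - y + (y - x)) with (t - x) in H by ring; lra.
  - apply is_derive_n_comp_trans, Derive_n_correct, ex_derive_n_PSeries.
    apply (Rbar_lt_le_trans _ r); [exact Hy | exact Hrad].
Qed.

Lemma Derive_n_local_pseries_center (k : nat) : 0 < r ->
  Derive_n f k x = a k * INR (fact k).
Proof.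
  intro Hr.
  assert (Hx : Rabs (x - x) < r) by (rewrite Rminus_diag, Rabs_R0; exact Hr).
  rewrite (is_derive_n_unique _ _ _ _ (is_derive_n_local_pseries x k Hx)), Rminus_diag.
  apply Derive_n_coef, (Rbar_lt_le_trans _ r); [exact Hr | exact Hrad].
Qed.

End LocalPSeries.

Lemma analytic_ex_derive_n (f : R -> R) : real_analytic f -> forall k y, ex_derive_n f k y.
Proof.
  intros Hf k y; destruct (analytic_local_pseries f Hf y) as [a [r [Hr [Hrad Hrep]]]].
  assert (Hy : Rabs (y - y) < r) by (rewrite Rminus_diag, Rabs_R0; exact Hr).
  destruct k; [exact I|].
  eexists; exact (is_derive_n_local_pseries f a y r Hrad Hrep y (S k) Hy).
Qed.

Lemma analytic_is_derive_Derive_n (f : R -> R) : real_analytic f -> forall k y,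
  is_derive (Derive_n f k) y (Derive_n f (S k) y).
Proof. intros Hf k y; apply Derive_correct, (analytic_ex_derive_n f Hf (S k)). Qed.

Lemma analytic_continuous_Derive_n (f : R -> R) : real_analytic f -> forall k y,
  continuous (Derive_n f k) y.
Proof.
  intros Hf k y.
  apply (ex_derive_continuous (Derive_n f k)), (analytic_ex_derive_n f Hf (S k)).
Qed.

Lemma analytic_shift (f : R -> R) (b : R) : real_analytic f -> real_analytic (fun t => f (t + b)).
Proof.
  intros Hf x; destruct (Hf (x + b)) as [a [r [Hr H]]].
  exists a, r; split; [exact Hr|]; intros y Hy.
  replace (y - x) with (y + b - (x + b)) in * by ring; exact (H _ Hy).
Qed.

Lemma analytic_const (c : R) : real_analytic (fun _ => c).
Proof.
  intro x; exists (fun n => match n with O => c | S _ => 0 end), 1; split; [lra|].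
  intros y _; apply is_pseries_R, (filterlim_ext (fun _ => c)); [|apply filterlim_const].
  intro n; induction n as [|n IH]; [rewrite sum_O; simpl; ring|].
  rewrite sum_Sn, <- IH; unfold plus; simpl; ring.
Qed.

Lemma analytic_identity (f h : R -> R) (x0 : R) : real_analytic f -> real_analytic h ->
  (forall k, Derive_n f k x0 = Derive_n h k x0) -> forall y, f y = h y.
Proof.
  intros Hf Hh H0 y.
  refine (locally_constant_everywhere
            (fun x => forall k, Derive_n f k x = Derive_n h k x) _ _ x0 y H0 O).
  - intros x Hx.
    destruct (analytic_local_pseries f Hf x) as [a [r1 [Hr1 [Hrad1 Hrep1]]]].
    destruct (analytic_local_pseries h Hh x) as [b [r2 [Hr2 [Hrad2 Hrep2]]]].
    assert (Hab : forall k, a k = b k).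
    { intro k; pose proof (Hx k) as E.
      rewrite (Derive_n_local_pseries_center f a x r1 Hrad1 Hrep1 k Hr1),
              (Derive_n_local_pseries_center h b x r2 Hrad2 Hrep2 k Hr2) in E.
      apply Rmult_eq_reg_r in E; [exact E | apply INR_fact_neq_0]. }
    assert (Heq : locally x (fun t => f t = h t)).
    { exists (mkposreal _ (Rmin_pos _ _ Hr1 Hr2)); intros t Ht.
      change (Rabs (t - x) < Rmin r1 r2) in Ht.
      pose proof (Rmin_l r1 r2); pose proof (Rmin_r r1 r2).
      rewrite (Hrep1 t), (Hrep2 t) by lra; apply PSeries_ext, Hab. }
    apply (filter_imp _ _ (fun z Hz k => Derive_n_ext_loc f h k z Hz) (locally_locally _ _ Heq)).
  - intros x Hx; apply not_all_ex_not in Hx; destruct Hx as [k Hk].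
    apply (filter_imp (fun z => Derive_n f k z <> Derive_n h k z));
      [intros z Hz Hall; exact (Hz (Hall k))|].
    apply continuous_neq_locally; [apply analytic_continuous_Derive_n.. | exact Hk]; assumption.
Qed.

Lemma increment_ge_linear_near (g g' : R -> R) (u : R) :
  (forall x, is_derive g x (g' x)) -> continuous g' u -> g' u <> 0 ->
  exists c r, 0 < c /\ 0 < r /\ forall theta psi,
    Rabs (theta - u) < r -> Rabs psi < r -> c * Rabs psi <= Rabs (g (theta + psi) - g theta).
Proof.
  intros Hg Hc Hu.
  set (m := Rabs (g' u)).
  assert (Hm : 0 < m) by (apply Rabs_pos_lt, Hu).
  destruct (continuous_eps_delta g' u (m / 2) Hc ltac:(lra)) as [d [Hd C]].
  exists (m / 2), (d / 2); split; [lra|]; split; [lra|].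
  intros theta psi Ht Hpsi.
  destruct (MVT_gen g theta (theta + psi) g') as [t [Ht' Heq]].
  - intros x _; apply Hg.
  - intros x _; apply continuity_pt_filterlim, (ex_derive_continuous g); eexists; apply Hg.
  - assert (Htu : Rabs (t - u) < d).
    { apply Rabs_def2 in Ht; apply Rabs_def2 in Hpsi; apply Rabs_def1;
        destruct (Rle_dec theta (theta + psi));
        rewrite ?Rmin_left, ?Rmax_right, ?Rmin_right, ?Rmax_left in Ht' by lra; lra. }
    specialize (C t Htu).
    pose proof (Rabs_triang_inv (g' u) (g' t)) as T; rewrite Rabs_minus_sym in T.
    rewrite Heq; replace (theta + psi - theta) with psi by ring; rewrite Rabs_mult.
    apply Rmult_le_compat_r; [apply Rabs_pos | unfold m in *; lra].
Qed.

Lemma increment_ge_const_near (g : R -> R) (u w : R) :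
  continuous g u -> continuous g (u + w) -> g (u + w) <> g u ->
  exists c r, 0 < c /\ 0 < r /\ forall theta phi,
    Rabs (theta - u) < r -> Rabs (phi - w) < r -> c <= Rabs (g (theta + phi) - g theta).
Proof.
  intros Hu Huw Hne.
  set (m := Rabs (g (u + w) - g u)).
  assert (Hm : 0 < m) by (apply Rabs_pos_lt; lra).
  destruct (continuous_eps_delta g (u + w) (m / 4) Huw ltac:(lra)) as [d1 [Hd1 C1]].
  destruct (continuous_eps_delta g u (m / 4) Hu ltac:(lra)) as [d2 [Hd2 C2]].
  exists (m / 2), (Rmin d1 d2 / 2); split; [lra|].
  split; [pose proof (Rmin_pos d1 d2 Hd1 Hd2); lra|].
  intros theta phi Ht Hphi.
  pose proof (Rmin_l d1 d2); pose proof (Rmin_r d1 d2).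
  specialize (C2 theta ltac:(lra)).
  specialize (C1 (theta + phi)).
  pose proof (Rabs_triang (theta - u) (phi - w)).
  replace (theta - u + (phi - w)) with (theta + phi - (u + w)) in H1 by ring.
  specialize (C1 ltac:(lra)).
  pose proof (Rabs_triang (g (u + w) - g (theta + phi)) (g (theta + phi) - g theta)).
  pose proof (Rabs_triang (g (u + w) - g theta) (g theta - g u)).
  rewrite Rabs_minus_sym in C1.
  replace (g (u + w) - g (theta + phi) + (g (theta + phi) - g theta))
    with (g (u + w) - g theta) in H2 by ring.
  replace (g (u + w) - g theta + (g theta - g u)) with (g (u + w) - g u) in H3 by ring.
  unfold m in *; lra.
Qed.

Lemma nonconstant_analytic_Derive_n_neq0 (v : R -> R) :
  real_analytic v -> (~ exists k : R, forall x : R, v x = k) ->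
  forall u, exists k, Derive_n v (S k) u <> 0.
Proof.
  intros Hv Hnc u; apply NNPP; intro Hall; apply Hnc; exists (v u).
  apply (analytic_identity v (fun _ => v u) u Hv (analytic_const _)).
  intros [|k]; [reflexivity|]; rewrite Derive_n_const.
  apply NNPP; intro Hk; apply Hall; exists k; exact Hk.
Qed.

Lemma minimal_period_Derive_n_neq (v : R -> R) :
  real_analytic v -> minimal_period_one v ->
  forall u w, 0 < w < 1 -> exists k, Derive_n v k (u + w) <> Derive_n v k u.
Proof.
  intros Hv [_ Hmin] u w Hw; apply NNPP; intro Hall; apply (Hmin w Hw); intro x.
  apply (analytic_identity (fun t => v (t + w)) v u (analytic_shift v w Hv) Hv).
  intro k; rewrite Derive_n_comp_trans.
  apply NNPP; intro Hk; apply Hall; exists k; exact Hk.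
Qed.

Lemma is_period_Derive_n (f : R -> R) (T : R) (k : nat) :
  is_period f T -> is_period (Derive_n f k) T.
Proof. intros Hp x; rewrite <- Derive_n_comp_trans; apply Derive_n_ext, Hp. Qed.

Lemma is_period_IZR (f : R -> R) : is_period f 1 -> forall z : Z, is_period f (IZR z).
Proof.
  intros Hp.
  assert (Hnat : forall n x, f (x + INR n) = f x).
  { intros n; induction n as [|n IH]; intro x; [now rewrite Rplus_0_r|].
    rewrite S_INR, <- Rplus_assoc, Hp; apply IH. }
  intros z x; destruct (Z_le_gt_dec 0 z) as [Hz|Hz].
  - rewrite <- (Z2Nat.id z Hz), <- INR_IZR_INZ; apply Hnat.
  - replace z with (- Z.of_nat (Z.to_nat (- z)))%Z by lia.
    rewrite opp_IZR, <- INR_IZR_INZ, <- (Hnat (Z.to_nat (- z))); f_equal; ring.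
Qed.

Lemma torus_norm_le (phi : R) (l : Z) : torus_norm phi <= Rabs (IZR l - phi).
Proof.
  unfold torus_norm.
  destruct (Glb_Rbar_correct (fun x => exists l : Z, x = Rabs (IZR l - phi))) as [Hlb _].
  specialize (Hlb _ (ex_intro _ l eq_refl)).
  destruct (Glb_Rbar _); simpl in *; try easy; apply Rabs_pos.
Qed.

Lemma torus_norm_ge0 (phi : R) : 0 <= torus_norm phi.
Proof.
  unfold torus_norm.
  destruct (Glb_Rbar_correct (fun x => exists l : Z, x = Rabs (IZR l - phi))) as [_ Hglb].
  assert (H0 : Rbar_le 0 (Glb_Rbar (fun x => exists l : Z, x = Rabs (IZR l - phi)))).
  { apply Hglb; intros x [l ->]; apply Rabs_pos. }
  destruct (Glb_Rbar _); simpl in *; try easy; lra.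
Qed.

Lemma torus_norm_le1 (phi : R) : torus_norm phi <= 1.
Proof.
  pose proof (torus_norm_le phi (up phi)); destruct (archimed phi).
  rewrite Rabs_pos_eq in H by lra; lra.
Qed.

Lemma torus_norm_shift (phi : R) (n : Z) : torus_norm (phi + IZR n) = torus_norm phi.
Proof.
  unfold torus_norm; f_equal; apply Glb_Rbar_eqset; intro x; split.
  - intros [l ->]; exists (l - n)%Z; rewrite minus_IZR; f_equal; ring.
  - intros [l ->]; exists (l + n)%Z; rewrite plus_IZR; f_equal; ring.
Qed.

Lemma max_upto_ge (f : nat -> R) (s k : nat) : (k <= s)%nat -> f k <= max_upto f s.
Proof.
  induction 1 as [|s _ IH]; [destruct k; simpl; [lra | apply Rmax_r]|].
  eapply Rle_trans; [exact IH | apply Rmax_l].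
Qed.

Lemma max_upto_mono (f : nat -> R) (s s' : nat) : (s <= s')%nat -> max_upto f s <= max_upto f s'.
Proof. induction 1 as [|s' _ IH]; simpl; [lra | eapply Rle_trans; [exact IH | apply Rmax_l]]. Qed.

Lemma max_upto_ext (f g : nat -> R) (s : nat) :
  (forall l, f l = g l) -> max_upto f s = max_upto g s.
Proof. intro H; induction s as [|s IH]; simpl; rewrite ?IH, ?H; reflexivity. Qed.

Definition increment_jet (v : R -> R) (s : nat) (theta phi : R) : R :=
  max_upto (fun l => Rabs (Derive_n (fun t => v (t + phi) - v t) l theta)) s.

Lemma Derive_n_increment (v : R -> R) (l : nat) (theta phi : R) : real_analytic v ->
  Derive_n (fun t => v (t + phi) - v t) l theta
  = Derive_n v l (theta + phi) - Derive_n v l theta.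
Proof.
  intro Hv; rewrite Derive_n_minus, Derive_n_comp_trans; [reflexivity|..];
    apply filter_forall; intros y k _.
  - apply ex_derive_n_comp_trans, analytic_ex_derive_n, Hv.
  - apply analytic_ex_derive_n, Hv.
Qed.

Lemma increment_jet_ge (v : R -> R) (s k : nat) (theta phi : R) :
  real_analytic v -> (k <= s)%nat ->
  Rabs (Derive_n v k (theta + phi) - Derive_n v k theta) <= increment_jet v s theta phi.
Proof.
  intros Hv Hk; rewrite <- Derive_n_increment by exact Hv.
  exact (max_upto_ge (fun l => Rabs (Derive_n (fun t => v (t + phi) - v t) l theta)) s k Hk).
Qed.

Lemma increment_jet_mono (v : R -> R) (s s' : nat) (theta phi : R) :
  (s <= s')%nat -> increment_jet v s theta phi <= increment_jet v s' theta phi.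
Proof. apply max_upto_mono. Qed.

Lemma increment_jet_shift (v : R -> R) (s : nat) (theta phi : R) (m n : Z) :
  is_period v 1 -> increment_jet v s (theta + IZR m) (phi + IZR n) = increment_jet v s theta phi.
Proof.
  intro Hp; apply max_upto_ext; intro l; f_equal.
  rewrite (Derive_n_ext _ (fun t => v (t + phi) - v t)).
  - apply is_period_Derive_n, is_period_IZR; intro t.
    cbv beta; replace (t + 1 + phi) with (t + phi + 1) by ring; now rewrite !Hp.
  - intro t; now rewrite <- Rplus_assoc, (is_period_IZR v Hp n).
Qed.

Lemma increment_jet_ge_near0 (v : R -> R) :
  real_analytic v -> (~ exists k : R, forall x : R, v x = k) ->
  forall u, exists s c r, 0 < c /\ 0 < r /\ forall theta phi,
    Rabs (theta - u) < r -> Rabs phi < r -> c * torus_norm phi <= increment_jet v s theta phi.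
Proof.
  intros Hv Hnc u.
  destruct (nonconstant_analytic_Derive_n_neq0 v Hv Hnc u) as [k Hk].
  destruct (increment_ge_linear_near (Derive_n v k) (Derive_n v (S k)) u
              (analytic_is_derive_Derive_n v Hv k) (analytic_continuous_Derive_n v Hv (S k) u) Hk)
    as [c [r [Hc [Hr H]]]].
  exists k, c, r; split; [exact Hc|]; split; [exact Hr|]; intros theta phi Ht Hphi.
  eapply Rle_trans; [|apply (increment_jet_ge v k k); [exact Hv | apply le_n]].
  eapply Rle_trans; [|exact (H theta phi Ht Hphi)].
  apply Rmult_le_compat_l; [lra|].
  pose proof (torus_norm_le phi 0) as T; rewrite Rminus_0_l, Rabs_Ropp in T; exact T.
Qed.

Lemma increment_jet_ge_near (v : R -> R) :
  real_analytic v -> (~ exists k : R, forall x : R, v x = k) -> minimal_period_one v ->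
  forall u w, 0 <= w <= 1 -> exists s c r, 0 < c /\ 0 < r /\ forall theta phi,
    Rabs (theta - u) < r -> Rabs (phi - w) < r -> c * torus_norm phi <= increment_jet v s theta phi.
Proof.
  intros Hv Hnc Hmp u w Hw.
  destruct (Req_dec w 0) as [->|H0].
  { destruct (increment_jet_ge_near0 v Hv Hnc u) as [s [c [r [Hc [Hr H]]]]].
    exists s, c, r; split; [exact Hc|]; split; [exact Hr|]; intros theta phi Ht Hphi.
    rewrite Rminus_0_r in Hphi; exact (H theta phi Ht Hphi). }
  destruct (Req_dec w 1) as [->|H1].
  { destruct (increment_jet_ge_near0 v Hv Hnc u) as [s [c [r [Hc [Hr H]]]]].
    exists s, c, r; split; [exact Hc|]; split; [exact Hr|]; intros theta phi Ht Hphi.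
    replace (torus_norm phi) with (torus_norm (phi - 1)).
    2:{ rewrite <- (torus_norm_shift (phi - 1) 1); f_equal; simpl; ring. }
    replace (increment_jet v s theta phi) with (increment_jet v s theta (phi - 1)).
    2:{ rewrite <- (increment_jet_shift v s theta (phi - 1) 0 1) by apply Hmp.
        f_equal; simpl; ring. }
    exact (H theta (phi - 1) Ht Hphi). }
  destruct (minimal_period_Derive_n_neq v Hv Hmp u w ltac:(lra)) as [k Hk].
  destruct (increment_ge_const_near (Derive_n v k) u w
              (analytic_continuous_Derive_n v Hv k u)
              (analytic_continuous_Derive_n v Hv k (u + w)) Hk) as [c [r [Hc [Hr H]]]].
  exists k, c, r; split; [exact Hc|]; split; [exact Hr|]; intros theta phi Ht Hphi.
  eapply Rle_trans; [|apply (increment_jet_ge v k k); [exact Hv | apply le_n]].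
  eapply Rle_trans; [|exact (H theta phi Ht Hphi)].
  pose proof (torus_norm_le1 phi); pose proof (torus_norm_ge0 phi).
  rewrite <- (Rmult_1_r c) at 2; apply Rmult_le_compat_l; lra.
Qed.

Lemma uniform_bound_on_unit_square (Q : nat -> R -> R -> R -> Prop) :
  (forall s s' c c' x y, Q s c x y -> (s <= s')%nat -> 0 < c' <= c -> Q s' c' x y) ->
  (forall u w, 0 <= u <= 1 -> 0 <= w <= 1 -> exists s c r, 0 < c /\ 0 < r /\
     forall x y, Rabs (x - u) < r -> Rabs (y - w) < r -> Q s c x y) ->
  exists s c, 0 < c /\ forall x y, 0 <= x <= 1 -> 0 <= y <= 1 -> Q s c x y.
Proof.
  intros Hmono Hloc.
  assert (Hdelta : forall u w, exists delta, 0 < delta /\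
    (0 <= u <= 1 -> 0 <= w <= 1 -> forall x y N,
       Rabs (x - u) < delta -> Rabs (y - w) < delta -> / delta < INR N -> Q N delta x y)).
  { intros u w; destruct (classic (0 <= u <= 1 /\ 0 <= w <= 1)) as [[Hu Hw]|Hout].
    2:{ exists 1; split; [lra|]; intros Hu Hw; exfalso; tauto. }
    destruct (Hloc u w Hu Hw) as [s [c [r [Hc [Hr H]]]]].
    (* One number bounding the radius and the constant from above and 1/(s+1) from below,
       so that a uniform lower bound on it controls all three. *)
    assert (Hs : 0 < INR s + 1) by (pose proof (pos_INR s); lra).
    pose proof (Rmin_l (Rmin r c) (/ (INR s + 1))); pose proof (Rmin_r (Rmin r c) (/ (INR s + 1))).
    pose proof (Rmin_l r c); pose proof (Rmin_r r c).
    set (delta := Rmin (Rmin r c) (/ (INR s + 1))) in *.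
    assert (Hd : 0 < delta) by (apply Rmin_pos; [apply Rmin_pos | apply Rinv_0_lt_compat]; lra).
    exists delta; split; [exact Hd|]; intros _ _ x y N Hx Hy HN.
    apply (Hmono s N c delta); [apply H; lra| |lra].
    assert (INR s + 1 <= / delta).
    { rewrite <- (Rinv_inv (INR s + 1)); apply Rinv_le_contravar; lra. }
    apply INR_le; lra. }
  pose (delta u w := mkposreal _ (proj1 (proj2_sig
                       (constructive_indefinite_description _ (Hdelta u w))))).
  destruct (compactness_value_2d 0 1 0 1 delta) as [d Hd].
  destruct (INR_unbounded (/ d)) as [N HN].
  exists N, d; split; [apply cond_pos|]; intros x y Hx Hy.
  apply NNPP; intro HQ; apply (Hd x y Hx Hy); intros [u [w [Hu [Hw [Hxu [Hyw Hdu]]]]]].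
  apply HQ; destruct (proj2_sig (constructive_indefinite_description _ (Hdelta u w))) as [Hpos H].
  pose proof (cond_pos d).
  apply (Hmono N N (delta u w) d); [apply H; try assumption| apply le_n | lra].
  apply (Rle_lt_trans _ (/ d)); [apply Rinv_le_contravar; assumption | exact HN].
Qed.

Lemma shift_into_unit_interval (x : R) : exists z : Z, 0 <= x + IZR z <= 1.
Proof.
  exists (- Int_part x)%Z; rewrite opp_IZR.
  pose proof (base_fp x); unfold frac_part in H; lra.
Qed.

Theorem lemmaB1 (v : R -> R) :
  real_analytic v ->
  (~ exists k : R, forall x : R, v x = k) ->
  minimal_period_one v ->
  exists (s : nat) (c : R), 0 < c /\
    forall theta phi : R,
      max_upto (fun l => Rabs (Derive_n (fun t => v (t + phi) - v t) l theta)) s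
        >= c * torus_norm phi.
Proof.
  intros Hv Hnc Hmp.
  destruct (uniform_bound_on_unit_square
              (fun s c theta phi => c * torus_norm phi <= increment_jet v s theta phi))
    as [s [c [Hc H]]].
  - intros s s' c c' theta phi Hb Hs Hc'.
    pose proof (torus_norm_ge0 phi); pose proof (increment_jet_mono v s s' theta phi Hs).
    apply (Rle_trans _ (c * torus_norm phi)); [apply Rmult_le_compat_r|]; lra.
  - intros u w _ Hw; exact (increment_jet_ge_near v Hv Hnc Hmp u w Hw).
  - exists s, c; split; [exact Hc|]; intros theta phi; apply Rle_ge.
    destruct (shift_into_unit_interval theta) as [m Hm].
    destruct (shift_into_unit_interval phi) as [n Hn].
    rewrite <- (torus_norm_shift phi n).
    change (max_upto _ s) with (increment_jet v s theta phi).
    rewrite <- (increment_jet_shift v s theta phi m n) by apply Hmp.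
    exact (H _ _ Hm Hn).
Qed.
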